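(* Let $n\ge1$. For every function $f(t)=\sum_{j=1}^na_je^{\lambda_jt}$ with $a_j,\lambda_j\in\mathbb{C}$ and $\mathrm{Re}(\lambda_j)<1/2$ for all $j$, $$\|f'\| \le \left(\max_{1\le j\le n}|\lambda_j| + \left(\sum_{j=1}^n\left(1-2\mathrm{Re}(\lambda_j)\right)\sum_{k=j+1}^n\left(1-2\mathrm{Re}(\lambda_k)\right)\right)^{1/2}\right)\|f\|,$$ where $\|g\|:=\left(\int_0^\infty|g(t)|^2e^{-t}\,dt\right)^{1/2}$. *)

From Stdlib Require Import Reals.
Open Scope R_scope.

Fixpoint rsum (n : nat) (F : nat -> R) : R :=
  match n with O => 0 | S k => rsum k F + F k end.

(* rmaxn n F = max(0, F 0, ..., F (n-1)); used on nonnegative F with n >= 1 *)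
Fixpoint rmaxn (n : nat) (F : nat -> R) : R :=
  match n with O => 0 | S k => Rmax (rmaxn k F) (F k) end.

Definition cmod (x y : R) : R := sqrt (x ^ 2 + y ^ 2).

(* Real and imaginary parts of f(t) = sum_{j<n} a_j e^{lambda_j t},
   a_j = ar j + i ai j, lambda_j = lr j + i li j,
   e^{lambda t} = e^{lr t} (cos (li t) + i sin (li t)). *)
Definition expsum_re (n : nat) (ar ai lr li : nat -> R) (t : R) : R :=
  rsum n (fun j => exp (lr j * t) * (ar j * cos (li j * t) - ai j * sin (li j * t))).
Definition expsum_im (n : nat) (ar ai lr li : nat -> R) (t : R) : R :=
  rsum n (fun j => exp (lr j * t) * (ar j * sin (li j * t) + ai j * cos (li j * t))).

Definition has_improper_integral0 (g : R -> R) (L : R) : Prop :=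
  exists pr : (forall T : R, Riemann_integrable g 0 T),
    forall eps : R, eps > 0 -> exists M : R, forall T : R, T >= M ->
      Rabs (RiemannInt (pr T) - L) < eps.

(* The weighted norm of f(t) = sum_j c_j e^{lambda_j t} is a Hermitian form in the
   coefficients, ||f||^2 = Re sum_{j,k} c_j conj(c_k) / K_jk with the Cauchy kernel
   K_jk = 1 - lambda_j - conj(lambda_k), and f' has coefficients lambda_j c_j.  Eliminating
   the last index (the Schur complement of a Cauchy matrix is again a Cauchy matrix) writes
   the form as |Y|^2 / w_n plus the same form on the remaining indices, where
   w_j = 1 - 2 Re lambda_j.  Induction on n, using along the way
   |sum_j c_j|^2 <= (sum_j w_j) ||f||^2 and the triangle inequality in the plane, bounds
   ||f'|| by (max_j |lambda_j| + (sum_{j<k} w_j w_k)^{1/2}) ||f||. *)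

From Stdlib Require Import Reals Lra Lia Psatz FunctionalExtensionality.
From Coquelicot Require Import Coquelicot.
Open Scope R_scope.

(** * Finite sums *)

Lemma rsum_ext n F G : (forall j, (j < n)%nat -> F j = G j) -> rsum n F = rsum n G.
Proof.
  induction n as [|n IH]; intros H; simpl; [reflexivity|].
  rewrite IH, H; auto.
Qed.

Lemma rsum_plus n F G : rsum n (fun j => F j + G j) = rsum n F + rsum n G.
Proof. induction n as [|n IH]; simpl; [ring|rewrite IH; ring]. Qed.

Lemma rsum_mult_r n a F : rsum n (fun j => F j * a) = rsum n F * a.
Proof. induction n as [|n IH]; simpl; [ring|rewrite IH; ring]. Qed.

Lemma rsum_opp n F : rsum n (fun j => - F j) = - rsum n F.
Proof. induction n as [|n IH]; simpl; [ring|rewrite IH; ring]. Qed.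

Lemma rsum_const0 n : rsum n (fun _ => 0) = 0.
Proof. induction n as [|n IH]; simpl; [reflexivity|rewrite IH; ring]. Qed.

Lemma rsum_nonneg n F : (forall j, (j < n)%nat -> 0 <= F j) -> 0 <= rsum n F.
Proof.
  induction n as [|n IH]; intros H; simpl; [lra|].
  assert (0 <= F n) by (apply H; lia).
  assert (0 <= rsum n F) by (apply IH; auto). lra.
Qed.

Lemma rmaxn_nonneg n F : 0 <= rmaxn n F.
Proof. induction n as [|n IH]; simpl; [lra|]. eapply Rle_trans; [exact IH|apply Rmax_l]. Qed.

Fixpoint csum (n : nat) (F : nat -> C) : C :=
  match n with O => 0 | S k => csum k F + F k end%C.

Lemma csum_ext n F G : (forall j, (j < n)%nat -> F j = G j) -> csum n F = csum n G.
Proof.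
  induction n as [|n IH]; intros H; simpl; [reflexivity|].
  rewrite IH, H; auto.
Qed.

Lemma csum_plus n (F G : nat -> C) : csum n (fun j => F j + G j)%C = (csum n F + csum n G)%C.
Proof. induction n as [|n IH]; simpl; [ring|rewrite IH; ring]. Qed.

Lemma csum_minus n (F G : nat -> C) : csum n (fun j => F j - G j)%C = (csum n F - csum n G)%C.
Proof. induction n as [|n IH]; simpl; [ring|rewrite IH; ring]. Qed.

Lemma csum_mult_l n (a : C) (F : nat -> C) : (a * csum n F)%C = csum n (fun j => a * F j)%C.
Proof. induction n as [|n IH]; simpl; [ring|rewrite <- IH; ring]. Qed.

Lemma csum_mult_r n (a : C) (F : nat -> C) : (csum n F * a)%C = csum n (fun j => F j * a)%C.
Proof. induction n as [|n IH]; simpl; [ring|rewrite <- IH; ring]. Qed.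

Lemma csum_conj n F : Cconj (csum n F) = csum n (fun j => Cconj (F j)).
Proof.
  induction n as [|n IH]; simpl.
  - apply injective_projections; simpl; ring.
  - rewrite Cplus_conj, IH; reflexivity.
Qed.

Lemma csum_mult_csum n m (F G : nat -> C) :
  (csum n F * csum m G)%C = csum n (fun j => csum m (fun k => F j * G k))%C.
Proof. rewrite csum_mult_r. apply csum_ext; intros. apply csum_mult_l. Qed.

Lemma re_csum n F : Re (csum n F) = rsum n (fun j => Re (F j)).
Proof. induction n as [|n IH]; simpl; [reflexivity|now rewrite <- IH]. Qed.

Lemma im_csum n F : Im (csum n F) = rsum n (fun j => Im (F j)).
Proof. induction n as [|n IH]; simpl; [reflexivity|now rewrite <- IH]. Qed.

Lemma csum_last0 n (F : nat -> C) : F n = 0%C -> csum (S n) F = csum n F.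
Proof. simpl; intros H; rewrite H; ring. Qed.

Lemma csum_const0 n : csum n (fun _ => 0%C) = 0%C.
Proof. induction n as [|n IH]; simpl; [reflexivity|rewrite IH; ring]. Qed.

Lemma le_of_sqr_le a b : 0 <= b -> a ^ 2 <= b ^ 2 -> a <= b.
Proof. intros. nra. Qed.

Lemma sqr_sum_le_weighted a b w W Q : 0 <= a -> 0 <= b -> 0 < w -> 0 <= W -> 0 <= Q ->
  b ^ 2 <= W * Q -> (a + b) ^ 2 <= (W + w) * (a ^ 2 / w + Q).
Proof.
  intros Ha Hb Hw HW HQ HbQ.
  set (u := a / w).
  assert (Hau : a = u * w) by (unfold u; field; lra).
  assert (Hu : 0 <= u) by (unfold u; apply Rdiv_le_0_compat; lra).
  clearbody u; subst a.
  replace ((u * w) ^ 2 / w) with (u ^ 2 * w) by (field; lra).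
  assert (Hub : 2 * u * b <= W * u ^ 2 + Q).
  { apply le_of_sqr_le; [nra|].
    assert (u ^ 2 * b ^ 2 <= u ^ 2 * (W * Q)) by (apply Rmult_le_compat_l; nra).
    pose proof (pow2_ge_0 (W * u ^ 2 - Q)). nra. }
  nra.
Qed.

(* Triangle inequality in the plane: (al x + p r, (mu + phi) r) = (al x, mu r) + r (p, phi). *)
Lemma Cmod_pair_bound al mu M x r p phi :
  0 <= al <= M -> 0 <= mu <= M -> 0 <= x -> 0 <= r -> 0 <= p -> 0 <= phi ->
  Cmod (al * x + p * r, (mu + phi) * r) <= (M + Cmod (p, phi)) * Cmod (x, r).
Proof.
  intros Hal Hmu Hx Hr Hp Hphi.
  replace ((al * x + p * r, (mu + phi) * r) : C) with (Cplus (al * x, mu * r) (Cmult r (p, phi)))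
    by (apply injective_projections; simpl; ring).
  eapply Rle_trans; [apply Cmod_triangle|].
  rewrite Cmod_mult, Cmod_R, Rabs_pos_eq by lra.
  assert (Hdiag : Cmod (al * x, mu * r) <= M * Cmod (x, r)).
  { apply le_of_sqr_le; [apply Rmult_le_pos; [lra|apply Cmod_ge_0]|].
    rewrite Rpow_mult_distr, !Cmod2_alt; simpl Re; simpl Im.
    assert (0 <= al * x <= M * x) by nra. assert (0 <= mu * r <= M * r) by nra. nra. }
  assert (Hrx : r <= Cmod (x, r)).
  { unfold Cmod; apply le_of_sqr_le; [apply sqrt_pos|].
    rewrite pow2_sqrt; simpl; nra. }
  assert (0 <= Cmod (p, phi)) by apply Cmod_ge_0.
  nra.
Qed.

Lemma schur_step_bound m d al a b w W Q mu F :
  0 <= al -> 0 <= a -> 0 <= b -> 0 < w -> 0 <= W -> 0 <= Q -> 0 <= mu -> 0 <= F ->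
  b ^ 2 <= W * Q -> 0 <= m -> m <= al * a + w * b -> d <= (mu + sqrt F) ^ 2 * Q ->
  m ^ 2 / w + d <= (Rmax mu al + sqrt (F + w * W)) ^ 2 * (a ^ 2 / w + Q).
Proof.
  intros Hal Ha Hb Hw HW HQ Hmu HF HbQ Hm Hma Hd.
  (* With x = a / sqrt w and r = sqrt Q, this is the square of Cmod_pair_bound. *)
  assert (Hpphi : sqrt (F + w * W) = Cmod (sqrt (w * W), sqrt F)).
  { unfold Cmod; simpl fst; simpl snd. rewrite !pow2_sqrt by nra. f_equal; ring. }
  assert (Hp : sqrt (w * W) = sqrt w * sqrt W) by (apply sqrt_mult; lra).
  rewrite Hpphi, Hp.
  assert (Hs : w = sqrt w ^ 2) by (rewrite pow2_sqrt; lra).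
  assert (Hs0 : 0 < sqrt w) by (apply sqrt_lt_R0; lra).
  set (s := sqrt w) in *; clearbody s; subst w.
  set (x := a / s); set (r := sqrt Q); set (phi := sqrt F).
  assert (Hx : 0 <= x) by (unfold x; apply Rdiv_le_0_compat; lra).
  assert (Hr2 : r ^ 2 = Q) by (apply pow2_sqrt; lra).
  assert (Hbr : b <= sqrt W * r).
  { apply le_of_sqr_le; [apply Rmult_le_pos; apply sqrt_pos|].
    rewrite Rpow_mult_distr, pow2_sqrt, Hr2; lra. }
  assert (Hmx : m / s <= al * x + s * sqrt W * r).
  { apply (Rmult_le_reg_r s); [lra|].
    replace (m / s * s) with m by (field; lra).
    replace ((al * x + s * sqrt W * r) * s) with (al * a + s ^ 2 * (sqrt W * r))
      by (unfold x; field; lra).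
    assert (s ^ 2 * b <= s ^ 2 * (sqrt W * r)) by (apply Rmult_le_compat_l; nra).
    lra. }
  assert (Hm2 : m ^ 2 / s ^ 2 <= (al * x + s * sqrt W * r) ^ 2).
  { replace (m ^ 2 / s ^ 2) with ((m / s) ^ 2) by (field; lra).
    apply pow_incr; split; [apply Rdiv_le_0_compat; lra|exact Hmx]. }
  assert (Hd2 : d <= ((mu + phi) * r) ^ 2) by (rewrite Rpow_mult_distr, Hr2; exact Hd).
  assert (Hpair := Cmod_pair_bound al mu (Rmax mu al) x r (s * sqrt W) phi
    ltac:(split; [lra|apply Rmax_r]) ltac:(split; [lra|apply Rmax_l])
    Hx (sqrt_pos _) ltac:(apply Rmult_le_pos; [lra|apply sqrt_pos]) (sqrt_pos _)).
  assert (Hsq := pow_incr _ _ 2 (conj (Cmod_ge_0 _) Hpair)).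
  rewrite Rpow_mult_distr, !Cmod2_alt in Hsq. simpl Re in Hsq; simpl Im in Hsq.
  replace (a ^ 2 / s ^ 2 + Q) with (x ^ 2 + r ^ 2) by (unfold x; rewrite Hr2; field; lra).
  lra.
Qed.

Section CauchyGram.

Variable lam : nat -> C.

Definition admissible n := forall j, (j < n)%nat -> Re (lam j) < 1 / 2.

(* [int_0^oo e^{lam_j t} conj(e^{lam_k t}) e^{-t} dt = 1 / kernel j k]. *)
Definition kernel j k : C := (1 - lam j - Cconj (lam k))%C.

Definition weight j : R := 1 - 2 * Re (lam j).

Definition gram n (c : nat -> C) : R :=
  Re (csum n (fun j => csum n (fun k => c j * Cconj (c k) / kernel j k)))%C.

Definition weight_sum n : R := rsum n weight.

Definition weight_esym2 n : R :=
  rsum n (fun j => weight j * rsum n (fun k => if (j <? k)%nat then weight k else 0)).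

Definition max_mod n : R := rmaxn n (fun j => Cmod (lam j)).

Lemma admissible_S n : admissible (S n) -> admissible n.
Proof. intros H j Hj; apply H; lia. Qed.

Lemma weight_pos j : Re (lam j) < 1 / 2 -> 0 < weight j.
Proof. unfold weight; lra. Qed.

Lemma kernel_neq0 j k : Re (lam j) < 1 / 2 -> Re (lam k) < 1 / 2 -> kernel j k <> 0%C.
Proof. intros Hj Hk E. apply (f_equal Re) in E. unfold kernel, Re in *; simpl in E. lra. Qed.

Lemma kernel_conj j k : Cconj (kernel j k) = kernel k j.
Proof. unfold kernel. apply injective_projections; simpl; ring. Qed.

Lemma kernel_diag j : kernel j j = RtoC (weight j).
Proof. unfold kernel, weight, Re. apply injective_projections; simpl; ring. Qed.

(** * Schur complement of the last index *)

Definition schur_head n (c : nat -> C) j : C := (c j * weight n / kernel j n)%C.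

Definition schur_coef n j : C := ((lam n - lam j) / kernel j n)%C.

Lemma schur_coef_diag n : schur_coef n n = 0%C.
Proof. unfold schur_coef, Cminus. rewrite Cplus_opp_r. apply Cmult_0_l. Qed.

(* The Cauchy-matrix identity behind the Schur complement:
   w K_jk + (lam_n - lam_j)(conj lam_n - conj lam_k) = K_jn K_nk, where w = K_nn. *)
Lemma gram_schur_entry n c j k :
  Re (lam j) < 1 / 2 -> Re (lam k) < 1 / 2 -> Re (lam n) < 1 / 2 ->
  (c j * Cconj (c k) / kernel j k)%C =
  (schur_head n c j * Cconj (schur_head n c k) / weight n
   + schur_coef n j * c j * Cconj (schur_coef n k * c k) / kernel j k)%C.
Proof.
  intros Hj Hk Hn.
  assert (Hjk := kernel_neq0 j k Hj Hk); assert (Hjn := kernel_neq0 j n Hj Hn).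
  assert (Hkn := kernel_neq0 k n Hk Hn); assert (Hnk := kernel_neq0 n k Hn Hk).
  assert (Hnn := kernel_neq0 n n Hn Hn).
  unfold schur_head, schur_coef. rewrite <- kernel_diag.
  rewrite !Cmult_conj, !Cdiv_conj, Cminus_conj, !Cmult_conj, !kernel_conj by auto.
  revert Hjk Hjn Hnk Hnn. unfold kernel. intros. field. repeat split; auto.
Qed.

Lemma gram_schur n c : admissible (S n) ->
  gram (S n) c = Cmod (csum (S n) (schur_head n c)) ^ 2 / weight n
                 + gram n (fun j => schur_coef n j * c j)%C.
Proof.
  intros H.
  assert (Hn : Re (lam n) < 1 / 2) by (apply H; lia).
  assert (Hw : weight n <> 0) by (apply Rgt_not_eq, weight_pos, Hn).
  unfold gram at 1.
  rewrite (csum_ext (S n) _ (fun j =>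
     csum (S n) (fun k => schur_head n c j * Cconj (schur_head n c k) / weight n)
     + csum (S n) (fun k => schur_coef n j * c j * Cconj (schur_coef n k * c k) / kernel j k))%C).
  2:{ intros j Hj. rewrite <- csum_plus. apply csum_ext. intros k Hk.
      apply gram_schur_entry; auto. }
  rewrite csum_plus, re_plus. f_equal.
  - rewrite <- (re_RtoC (_ / weight n)), RtoC_div, Cmod2_conj by exact Hw.
    unfold Cdiv. rewrite csum_conj, csum_mult_csum, csum_mult_r.
    f_equal. apply csum_ext; intros. symmetry; apply csum_mult_r.
  - unfold gram. rewrite (csum_last0 n).
    + f_equal. apply csum_ext; intros. apply csum_last0.
      rewrite schur_coef_diag, Cmult_0_l.
      replace (Cconj 0) with (RtoC 0) by (apply injective_projections; simpl; ring).
      unfold Cdiv. ring.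
    + rewrite <- (csum_const0 (S n)). apply csum_ext; intros.
      rewrite schur_coef_diag. unfold Cdiv. ring.
Qed.

Lemma csum_schur n c : admissible (S n) ->
  csum (S n) c = (csum (S n) (schur_head n c) + csum n (fun j => schur_coef n j * c j))%C.
Proof.
  intros H.
  assert (Hn : Re (lam n) < 1 / 2) by (apply H; lia).
  rewrite <- (csum_last0 n (fun j => schur_coef n j * c j)%C)
    by (rewrite schur_coef_diag; apply Cmult_0_l).
  rewrite <- csum_plus. apply csum_ext. intros j Hj.
  assert (Hjn := kernel_neq0 j n (H j Hj) Hn).
  unfold schur_head, schur_coef. rewrite <- kernel_diag.
  revert Hjn. unfold kernel. intros. field. exact Hjn.
Qed.

Lemma csum_schur_mul n c : admissible (S n) ->
  csum (S n) (schur_head n (fun j => lam j * c j)%C) =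
  (lam n * csum (S n) (schur_head n c)
   - weight n * csum n (fun j => schur_coef n j * c j))%C.
Proof.
  intros H.
  assert (Hn : Re (lam n) < 1 / 2) by (apply H; lia).
  rewrite <- (csum_last0 n (fun j => schur_coef n j * c j)%C)
    by (rewrite schur_coef_diag; apply Cmult_0_l).
  rewrite !csum_mult_l, <- csum_minus. apply csum_ext. intros j Hj.
  assert (Hjn := kernel_neq0 j n (H j Hj) Hn).
  unfold schur_head, schur_coef. field. exact Hjn.
Qed.

Lemma weight_sum_nonneg n : admissible n -> 0 <= weight_sum n.
Proof. intros H. apply rsum_nonneg. intros j Hj. apply Rlt_le, weight_pos, H, Hj. Qed.

Lemma weight_esym2_S n : weight_esym2 (S n) = weight_esym2 n + weight n * weight_sum n.
Proof.
  unfold weight_esym2, weight_sum. cbn [rsum].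
  rewrite Nat.ltb_irrefl,
    (rsum_ext n (fun k => if (n <? k)%nat then weight k else 0) (fun _ => 0)), rsum_const0.
  2:{ intros k Hk. destruct (Nat.ltb_spec n k); [lia|reflexivity]. }
  rewrite (rsum_ext n _ (fun j => weight j * rsum n (fun k => if (j <? k)%nat then weight k else 0)
                                + weight j * weight n)).
  2:{ intros j Hj. destruct (Nat.ltb_spec j n); [ring|lia]. }
  rewrite rsum_plus, rsum_mult_r. ring.
Qed.

Lemma weight_esym2_nonneg n : admissible n -> 0 <= weight_esym2 n.
Proof.
  induction n as [|n IH]; intros H; [unfold weight_esym2; simpl; lra|].
  rewrite weight_esym2_S.
  assert (0 < weight n) by (apply weight_pos, H; lia).
  assert (0 <= weight_sum n) by (apply weight_sum_nonneg, admissible_S, H).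
  assert (0 <= weight_esym2 n) by (apply IH, admissible_S, H).
  nra.
Qed.

Lemma gram_nonneg n c : admissible n -> 0 <= gram n c.
Proof.
  revert c; induction n as [|n IH]; intros c H; [unfold gram; simpl; lra|].
  rewrite gram_schur by exact H.
  assert (0 < weight n) by (apply weight_pos, H; lia).
  assert (0 <= Cmod (csum (S n) (schur_head n c)) ^ 2 / weight n)
    by (apply Rdiv_le_0_compat; [apply pow2_ge_0|assumption]).
  assert (0 <= gram n (fun j => schur_coef n j * c j)%C) by (apply IH, admissible_S, H).
  lra.
Qed.

Lemma Cmod_csum_sqr_le n c : admissible n -> Cmod (csum n c) ^ 2 <= weight_sum n * gram n c.
Proof.
  revert c; induction n as [|n IH]; intros c H.
  - unfold weight_sum, gram; simpl. rewrite Cmod_0. lra.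
  - assert (0 < weight n) by (apply weight_pos, H; lia).
    rewrite (csum_schur n c H), gram_schur by exact H.
    change (weight_sum (S n)) with (weight_sum n + weight n).
    eapply Rle_trans.
    + apply pow_incr. split; [apply Cmod_ge_0|apply Cmod_triangle].
    + apply sqr_sum_le_weighted; auto using Cmod_ge_0.
      * apply weight_sum_nonneg, admissible_S, H.
      * apply gram_nonneg, admissible_S, H.
      * apply IH, admissible_S, H.
Qed.

Lemma gram_mul_le n c : admissible n ->
  gram n (fun j => lam j * c j)%C <= (max_mod n + sqrt (weight_esym2 n)) ^ 2 * gram n c.
Proof.
  revert c; induction n as [|n IH]; intros c H; [unfold gram; simpl; lra|].
  assert (Hn : Re (lam n) < 1 / 2) by (apply H; lia).
  assert (Hw := weight_pos n Hn).
  assert (H' := admissible_S n H).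
  rewrite !gram_schur, csum_schur_mul, weight_esym2_S by exact H.
  change (max_mod (S n)) with (Rmax (max_mod n) (Cmod (lam n))).
  set (c' := fun j => (schur_coef n j * c j)%C).
  replace (fun j => schur_coef n j * (lam j * c j))%C with (fun j => lam j * c' j)%C
    by (apply functional_extensionality; intros j; unfold c'; ring).
  apply (schur_step_bound _ _ (Cmod (lam n)) (Cmod (csum (S n) (schur_head n c)))
    (Cmod (csum n c'))); auto using Cmod_ge_0, Rlt_le, gram_nonneg,
    weight_sum_nonneg, weight_esym2_nonneg, Cmod_csum_sqr_le.
  - apply rmaxn_nonneg.
  - unfold Cminus. eapply Rle_trans; [apply Cmod_triangle|].
    rewrite Cmod_opp, !Cmod_mult, Cmod_R, Rabs_pos_eq by lra. lra.
Qed.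

Lemma sqrt_gram_mul_le n c : admissible n ->
  sqrt (gram n (fun j => lam j * c j)%C)
  <= (max_mod n + sqrt (weight_esym2 n)) * sqrt (gram n c).
Proof.
  intros H.
  assert (0 <= max_mod n + sqrt (weight_esym2 n)).
  { pose proof (rmaxn_nonneg n (fun j => Cmod (lam j))).
    pose proof (sqrt_pos (weight_esym2 n)). unfold max_mod; lra. }
  rewrite <- (sqrt_pow2 (max_mod n + sqrt (weight_esym2 n))), <- sqrt_mult
    by (auto using pow2_ge_0, gram_nonneg).
  apply sqrt_le_1_alt, gram_mul_le, H.
Qed.

End CauchyGram.

(** * Exponential sums *)

Definition expC (z : C) (t : R) : C :=
  (exp (Re z * t) * cos (Im z * t), exp (Re z * t) * sin (Im z * t)).

Lemma expC_0 z : expC z 0 = 1%C.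
Proof.
  unfold expC. rewrite !Rmult_0_r, exp_0, cos_0, sin_0.
  apply injective_projections; simpl; ring.
Qed.

Lemma expC_mul_conj z w t :
  (expC z t * Cconj (expC w t) * exp (- t))%C = expC (z + Cconj w - 1) t.
Proof.
  assert (Hre : Re (z + Cconj w - 1) * t = Re z * t + Re w * t + - t) by (unfold Re; simpl; ring).
  assert (Him : Im (z + Cconj w - 1) * t = Im z * t - Im w * t) by (unfold Im; simpl; ring).
  unfold expC. rewrite Hre, Him, !exp_plus, cos_minus, sin_minus.
  apply injective_projections; simpl; ring.
Qed.

Lemma Cmod_expC z t : Cmod (expC z t) = exp (Re z * t).
Proof.
  unfold Cmod, expC; cbn [fst snd].
  replace (_ ^ 2 + _ ^ 2)
    with (exp (Re z * t) ^ 2 * (Rsqr (sin (Im z * t)) + Rsqr (cos (Im z * t))))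
    by (unfold Rsqr; ring).
  rewrite sin2_cos2, Rmult_1_r. apply sqrt_pow2, Rlt_le, exp_pos.
Qed.

Lemma is_derive_re_expC A z t :
  is_derive (fun t => Re (A * expC z t)) t (Re (z * A * expC z t)).
Proof. destruct A, z. unfold expC, Re, Im. simpl. auto_derive; auto. ring. Qed.

Lemma is_derive_im_expC A z t :
  is_derive (fun t => Im (A * expC z t)) t (Im (z * A * expC z t)).
Proof. destruct A, z. unfold expC, Re, Im. simpl. auto_derive; auto. ring. Qed.

Lemma is_lim_exp_lin_neg a : a < 0 -> is_lim (fun t => exp (a * t)) p_infty 0.
Proof.
  intros Ha.
  apply (is_lim_ext (fun t => exp (a * t + 0))); [intros; now rewrite Rplus_0_r|].
  apply is_lim_comp_lin; [|lra].
  replace (Rbar_plus (Rbar_mult a p_infty) 0) with m_infty; [apply is_lim_exp_m|].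
  simpl. unfold Rbar_mult'.
  destruct (Rle_dec 0 a) as [Ha'|]; [now apply Rlt_not_le in Ha|reflexivity].
Qed.

Lemma is_lim_re_expC A z : Re z < 0 -> is_lim (fun t => Re (A * expC z t)) p_infty 0.
Proof.
  intros Hz.
  assert (Hlim := is_lim_scal_l _ (Cmod A) _ _ (is_lim_exp_lin_neg _ Hz)).
  simpl in Hlim. rewrite Rmult_0_r in Hlim.
  apply (is_lim_le_le_loc (fun t => - (Cmod A * exp (Re z * t)))
                          (fun t => Cmod A * exp (Re z * t))).
  - exists 0. intros t _.
    assert (Hre := re_le_Cmod (A * expC z t)).
    rewrite Cmod_mult, Cmod_expC in Hre.
    revert Hre. unfold Rabs. destruct Rcase_abs; lra.
  - replace (Finite 0) with (Rbar_opp 0) by (simpl; f_equal; ring).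
    now apply is_lim_opp.
  - exact Hlim.
Qed.

Lemma is_derive_rsum n (F : nat -> R -> R) (dF : nat -> R) t :
  (forall j, (j < n)%nat -> is_derive (F j) t (dF j)) ->
  is_derive (fun t => rsum n (fun j => F j t)) t (rsum n dF).
Proof.
  induction n as [|n IH]; intros H; simpl.
  - apply is_derive_Reals, derivable_pt_lim_const.
  - apply (is_derive_plus (fun t => rsum n (fun j => F j t)) (F n)).
    + apply IH; intros; apply H; lia.
    + apply H; lia.
Qed.

Lemma is_lim_rsum n (F : nat -> R -> R) (l : nat -> R) x :
  (forall j, (j < n)%nat -> is_lim (F j) x (l j)) ->
  is_lim (fun t => rsum n (fun j => F j t)) x (rsum n l).
Proof.
  induction n as [|n IH]; intros H; simpl.
  - apply is_lim_const.
  - apply (is_lim_plus' (fun t => rsum n (fun j => F j t)) (F n)).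
    + apply IH; intros; apply H; lia.
    + apply H; lia.
Qed.

Lemma improper_integral0_primitive (G g : R -> R) L :
  (forall t, is_derive G t (g t)) -> (forall t, continuous g t) ->
  is_lim G p_infty 0 -> has_improper_integral0 g L -> L = - G 0.
Proof.
  intros HG Hg Hlim [pr Hpr].
  assert (HFTC : forall T, RiemannInt (pr T) = G T - G 0).
  { intros T. rewrite <- RInt_Reals.
    exact (is_RInt_unique _ _ _ _ (is_RInt_derive G g 0 T (fun t _ => HG t) (fun t _ => Hg t))). }
  assert (HL : is_lim (fun T => G T - G 0) p_infty L).
  { apply is_lim_spec. intros eps. destruct (Hpr eps (cond_pos eps)) as [M HM].
    exists M. intros T HT. rewrite <- HFTC. apply HM. lra. }
  assert (H0 : is_lim (fun T => G T - G 0) p_infty (0 - G 0))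
    by (apply is_lim_minus'; [exact Hlim|apply is_lim_const]).
  apply is_lim_unique in HL. apply is_lim_unique in H0.
  rewrite HL in H0. injection H0. lra.
Qed.

Definition expsum (lam c : nat -> C) n t : C := csum n (fun j => c j * expC (lam j) t)%C.

Lemma is_derive_re_expsum lam c n t :
  is_derive (fun t => Re (expsum lam c n t)) t (Re (expsum lam (fun j => lam j * c j)%C n t)).
Proof.
  unfold expsum. rewrite re_csum.
  apply (is_derive_ext (fun t => rsum n (fun j => Re (c j * expC (lam j) t))));
    [intros s; symmetry; apply re_csum|].
  apply (is_derive_rsum n (fun j t => Re (c j * expC (lam j) t))). intros j _.
  apply is_derive_re_expC.
Qed.

Lemma is_derive_im_expsum lam c n t :
  is_derive (fun t => Im (expsum lam c n t)) t (Im (expsum lam (fun j => lam j * c j)%C n t)).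
Proof.
  unfold expsum. rewrite im_csum.
  apply (is_derive_ext (fun t => rsum n (fun j => Im (c j * expC (lam j) t))));
    [intros s; symmetry; apply im_csum|].
  apply (is_derive_rsum n (fun j t => Im (c j * expC (lam j) t))). intros j _.
  apply is_derive_im_expC.
Qed.

Lemma Cmod_expsum_sqr lam c n t :
  Cmod (expsum lam c n t) ^ 2 * exp (- t) =
  rsum n (fun j => rsum n (fun k => Re (c j * Cconj (c k) * expC (- kernel lam j k) t))).
Proof.
  rewrite <- (re_RtoC (_ * exp (- t))), RtoC_mult, Cmod2_conj. unfold expsum.
  rewrite csum_conj, csum_mult_csum, csum_mult_r, re_csum. apply rsum_ext; intros j _.
  rewrite csum_mult_r, re_csum. apply rsum_ext; intros k _. f_equal.
  replace (- kernel lam j k)%C with (lam j + Cconj (lam k) - 1)%C by (unfold kernel; ring).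
  rewrite <- expC_mul_conj, Cmult_conj. ring.
Qed.

(* The primitive of c_j conj(c_k) e^{-K_jk t} is -(c_j conj(c_k) / K_jk) e^{-K_jk t},
   which vanishes at +oo because Re K_jk > 0. *)
Lemma gram_improper_integral lam c n L : admissible lam n ->
  has_improper_integral0 (fun t => Cmod (expsum lam c n t) ^ 2 * exp (- t)) L ->
  L = gram lam n c.
Proof.
  intros H Hint.
  set (A := fun j k => (- (c j * Cconj (c k) / kernel lam j k))%C).
  set (G := fun t => rsum n (fun j => rsum n (fun k => Re (A j k * expC (- kernel lam j k) t)))).
  assert (HG : forall t, is_derive G t (Cmod (expsum lam c n t) ^ 2 * exp (- t))).
  { intros t. rewrite Cmod_expsum_sqr.
    apply (is_derive_rsum n (fun j t => rsum n (fun k => Re (A j k * expC (- kernel lam j k) t)))).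
    intros j Hj.
    apply (is_derive_rsum n (fun k t => Re (A j k * expC (- kernel lam j k) t))).
    intros k Hk.
    replace (c j * Cconj (c k))%C with (- kernel lam j k * A j k)%C.
    - apply is_derive_re_expC.
    - unfold A. field. apply kernel_neq0; auto. }
  apply (improper_integral0_primitive G) in Hint; auto.
  - rewrite Hint. unfold G, gram. rewrite re_csum, <- rsum_opp. apply rsum_ext; intros j _.
    rewrite re_csum, <- rsum_opp. apply rsum_ext; intros k _.
    rewrite expC_0, Cmult_1_r. unfold A. rewrite re_opp. ring.
  - intros t.
    set (E := fun j k t => Re (c j * Cconj (c k) * expC (- kernel lam j k) t)).
    apply (continuous_ext (fun t => rsum n (fun j => rsum n (fun k => E j k t))));
      [intros s; symmetry; apply Cmod_expsum_sqr|].
    apply (@ex_derive_continuous R_AbsRing R_NormedModule). eexists.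
    apply (is_derive_rsum n (fun j t => rsum n (fun k => E j k t))). intros j _.
    apply (is_derive_rsum n (fun k t => E j k t)). intros k _.
    apply is_derive_re_expC.
  - rewrite <- (rsum_const0 n).
    apply (is_lim_rsum n (fun j t => rsum n (fun k => Re (A j k * expC (- kernel lam j k) t)))).
    intros j Hj. rewrite <- (rsum_const0 n).
    apply (is_lim_rsum n (fun k t => Re (A j k * expC (- kernel lam j k) t))).
    intros k Hk. apply is_lim_re_expC.
    assert (Hj' := H j Hj); assert (Hk' := H k Hk). unfold kernel, Re in *. simpl. lra.
Qed.

Theorem theorem10p1 (n : nat) (hn : (1 <= n)%nat) (ar ai lr li : nat -> R)
  (hre : forall j : nat, (j < n)%nat -> lr j < 1 / 2)
  (dre dim : R -> R)
  (hdre : forall t : R, derivable_pt_lim (expsum_re n ar ai lr li) t (dre t))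
  (hdim : forall t : R, derivable_pt_lim (expsum_im n ar ai lr li) t (dim t))
  (Nf Ndf : R)
  (hNf : has_improper_integral0
     (fun t => (cmod (expsum_re n ar ai lr li t) (expsum_im n ar ai lr li t)) ^ 2 * exp (- t)) Nf)
  (hNdf : has_improper_integral0
     (fun t => (cmod (dre t) (dim t)) ^ 2 * exp (- t)) Ndf) :
  sqrt Ndf <=
    (rmaxn n (fun j => cmod (lr j) (li j))
     + sqrt (rsum n (fun j => (1 - 2 * lr j) *
               rsum n (fun k => if (j <? k)%nat then 1 - 2 * lr k else 0))))
    * sqrt Nf.
Proof.
  set (lam := fun j => (lr j, li j) : C).
  set (c := fun j => (ar j, ai j) : C).
  assert (Hre : expsum_re n ar ai lr li = fun t => Re (expsum lam c n t)).
  { apply functional_extensionality; intros t. unfold expsum. rewrite re_csum.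
    apply rsum_ext; intros j _. unfold expC; simpl; ring. }
  assert (Him : expsum_im n ar ai lr li = fun t => Im (expsum lam c n t)).
  { apply functional_extensionality; intros t. unfold expsum. rewrite im_csum.
    apply rsum_ext; intros j _. unfold expC; simpl; ring. }
  assert (Hdre : dre = fun t => Re (expsum lam (fun j => lam j * c j)%C n t)).
  { apply functional_extensionality; intros t. apply (uniqueness_limite _ t _ _ (hdre t)).
    rewrite Hre. apply is_derive_Reals, is_derive_re_expsum. }
  assert (Hdim : dim = fun t => Im (expsum lam (fun j => lam j * c j)%C n t)).
  { apply functional_extensionality; intros t. apply (uniqueness_limite _ t _ _ (hdim t)).
    rewrite Him. apply is_derive_Reals, is_derive_im_expsum. }
  rewrite Hre, Him in hNf. subst dre dim.
  apply gram_improper_integral in hNf; [|exact hre].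
  apply gram_improper_integral in hNdf; [|exact hre].
  subst Nf Ndf. exact (sqrt_gram_mul_le lam n c hre).
Qed.
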